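(* Let $\Bbbk$ be an algebraically closed field of characteristic $2$ and let $\mathfrak{u}(\mathfrak{m})$ be the algebra generated by $a,b,c$ with relations $ab+ba=c$, $ac+ca=a$, $bc+cb=b$, $a^4=b^4=0$, $c^2+c=0$. Then, up to isomorphism, the simple finite-dimensional left $\mathfrak{u}(\mathfrak{m})$-modules are exactly $V_0$ and $V_1$.
   Context: $V_0$ is the one-dimensional module on which $a,b,c$ act by $0$. $V_1$ is the three-dimensional module with basis $v_1,v_2,v_3$ and action $av_1=v_2$, $av_2=v_3$, $av_3=0$; $bv_1=0$, $bv_2=v_1$, $bv_3=v_2$; $cv_1=v_1$, $cv_2=0$, $cv_3=v_3$ (this is the adjoint representation on the $3$-dimensional Lie algebra with basis $b,c,a$). *)

From HB Require Import structures.
From mathcomp Require Import all_boot all_order all_algebra.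
Set Implicit Arguments. Unset Strict Implicit. Unset Printing Implicit Defensive.
Import GRing.Theory.
Local Open Scope ring_scope.

(* Finite-dimensional left u(m)-modules = k^n (row vectors) with generators
   a,b,c acting by matrices A,B,C: x . v := v *m rho(x).  (With row vectors
   this is an anti-homomorphism on products, but every defining relation is
   invariant under reversing products, so this is exactly the same data.) *)
Section UM.
Variable k : fieldType.

Definition um_rep n (A B C : 'M[k]_n) : Prop :=
  [/\ A *m B + B *m A = C,
      A *m C + C *m A = A,
      B *m C + C *m B = B
    & [/\ A *m A *m A *m A = 0,
           B *m B *m B *m B = 0
         & C *m C + C = 0]].

Definition um_simple n (A B C : 'M[k]_n) : Prop :=
  (0 < n)%N /\
  forall U : 'M[k]_n,
    (U *m A <= U)%MS -> (U *m B <= U)%MS -> (U *m C <= U)%MS ->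
    U = 0 \/ row_full U.

Definition um_iso n m (A B C : 'M[k]_n) (A' B' C' : 'M[k]_m) : Prop :=
  exists P : 'M[k]_(n, m),
    [/\ row_free P, row_full P,
        A *m P = P *m A', B *m P = P *m B' & C *m P = P *m C'].

Definition V0 : 'M[k]_1 := 0.

(* V_1 : basis v1,v2,v3 = rows 0,1,2.
   a v1 = v2, a v2 = v3, a v3 = 0;  b v1 = 0, b v2 = v1, b v3 = v2;
   c v1 = v1, c v2 = 0, c v3 = v3. *)
Definition V1a : 'M[k]_3 :=
  \matrix_(i < 3, j < 3) (if (j == i.+1 :> nat) then 1 else 0).
Definition V1b : 'M[k]_3 :=
  \matrix_(i < 3, j < 3) (if (i == j.+1 :> nat) then 1 else 0).
Definition V1c : 'M[k]_3 :=
  \matrix_(i < 3, j < 3) (if (i == j) && (i != 1 :> nat) then 1 else 0).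
End UM.

From HB Require Import structures.
From mathcomp Require Import all_boot all_order all_algebra.
Set Implicit Arguments. Unset Strict Implicit. Unset Printing Implicit Defensive.
Import GRing.Theory.
Local Open Scope ring_scope.

(* In characteristic 2 the relations are commutation rules: ba = ab + c,
   ca = ac + a, cb = bc + b and c^2 = c.  Since a is nilpotent, a simple
   module M has a vector v <> 0 with av = 0.  If cv <> 0 it is a
   highest-weight vector (a kills it, c fixes it); otherwise bv is one, unless
   bv = 0 as well, and then v spans a copy of V_0.  For a highest-weight
   vector w, b^3 w is killed by a, b and c, so it vanishes (otherwise M would
   be one-dimensional with c = 0), and b^2 w, bw, w are the images of
   v_1, v_2, v_3 under a nonzero module map V_1 -> M, an isomorphism by
   Schur's lemma. *)

Lemma sum3 (V : nmodType) (F : 'I_3 -> V) : \sum_(i < 3) F i = F 0 + F 1 + F 2.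
Proof.
by rewrite !big_ord_recr big_ord0 /= add0r; congr (F _ + F _ + F _); apply: val_inj.
Qed.

Lemma ord3P (P : 'I_3 -> Prop) : P 0 -> P 1 -> P 2 -> forall i, P i.
Proof.
move=> P0 P1 P2 [[|[|[|i]]] lti] //; [move: P0 | move: P1 | move: P2].
all: by congr P; apply: val_inj.
Qed.

Section Modules.
Variable k : fieldType.

Lemma stablemx_nilpotent_null p n (U : 'M[k]_(p, n)) (A : 'M[k]_n) m :
  stablemx U A -> A ^+ m = 0 -> U != 0 ->
  exists v : 'rV_n, [/\ (v <= U)%MS, v != 0 & v *m A = 0].
Proof.
move=> stA Am /rowV0Pn [u uU nzu].
have : u *m A ^+ m = 0 by rewrite Am mulmx0.
elim: m u uU nzu {Am} => [|m IHm] u uU nzu.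
  by rewrite expr0 mulmx1 => u0; rewrite u0 eqxx in nzu.
rewrite exprS -mulmxE mulmxA => uAm.
have [uA0 | nzuA] := eqVneq (u *m A) 0; first by exists u.
exact: IHm (submx_trans (submxMr A uU) stA) nzuA uAm.
Qed.

Lemma um_rep0 n : um_rep (0 : 'M[k]_n) 0 0.
Proof. by split; rewrite ?mulmx0 ?addr0 //; split; rewrite ?mulmx0 ?addr0. Qed.

Lemma um_simple1 (A B C : 'M[k]_1) : um_simple A B C.
Proof.
split=> // U _ _ _; have [-> | nzU] := eqVneq U 0; [by left | right].
by rewrite /row_full eqn_leq rank_leq_col lt0n mxrank_eq0.
Qed.

Lemma um_iso_dim m n (A B C : 'M[k]_m) (A' B' C' : 'M[k]_n) :
  um_iso A B C A' B' C' -> m = n.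
Proof. by case=> P [/eqP free /eqP full _ _ _]; rewrite -[LHS]free -[RHS]full. Qed.

Lemma um_iso_sym m n (A B C : 'M[k]_m) (A' B' C' : 'M[k]_n) :
  um_iso A B C A' B' C' -> um_iso A' B' C' A B C.
Proof.
case=> P [free full PA PB PC]; set P' := pinvmx P.
have PP' : P *m P' = 1%:M by exact: mulmxVp.
have P'P : P' *m P = 1%:M by exact: mulVpmx.
have flip X Y : X *m P = P *m Y -> Y *m P' = P' *m X.
  move=> XP.
  by rewrite -[Y *m P']mul1mx -P'P -!mulmxA (mulmxA P) -XP -!mulmxA PP' mulmx1.
exists P'; split; try exact: flip.
  by rewrite /row_free eqn_leq rank_leq_row -{1}(mxrank1 k n) -P'P mxrankM_maxl.
by rewrite /row_full eqn_leq rank_leq_col -{1}(mxrank1 k m) -PP' mxrankM_maxr.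
Qed.

Lemma um_schur m n (A B C : 'M[k]_m) (A' B' C' : 'M[k]_n) (Q : 'M[k]_(m, n)) :
  um_simple A B C -> um_simple A' B' C' -> Q != 0 ->
  A *m Q = Q *m A' -> B *m Q = Q *m B' -> C *m Q = Q *m C' ->
  row_free Q /\ row_full Q.
Proof.
move=> [_ simple] [_ simple'] nzQ QA QB QC.
have image_stable X X' : X *m Q = Q *m X' -> stablemx <<Q>> X'.
  by move=> XQ; rewrite (eqmxMr _ (genmxE Q)) !genmxE -XQ submxMl.
have kernel_stable X X' : X *m Q = Q *m X' -> stablemx (kermx Q) X.
  by move=> XQ; apply/sub_kermxP; rewrite -mulmxA XQ mulmxA mulmx_ker mul0mx.
split.
  rewrite -kermx_eq0.
  case: (simple _ (kernel_stable _ _ QA) (kernel_stable _ _ QB)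
                  (kernel_stable _ _ QC)) => [-> // | full].
  by case/eqP: nzQ; apply: (row_full_inj full); rewrite mulmx_ker mulmx0.
case: (simple' _ (image_stable _ _ QA) (image_stable _ _ QB)
                 (image_stable _ _ QC)) => [/eqP | ]; last by rewrite /row_full genmxE.
by rewrite -submx0 genmxE submx0 (negbTE nzQ).
Qed.

Lemma um_iso_of_intertwiner m n (A B C : 'M[k]_m) (A' B' C' : 'M[k]_n)
    (Q : 'M[k]_(m, n)) :
  um_simple A B C -> um_simple A' B' C' -> Q != 0 ->
  A *m Q = Q *m A' -> B *m Q = Q *m B' -> C *m Q = Q *m C' ->
  um_iso A B C A' B' C'.
Proof.
move=> simple simple' nzQ QA QB QC.
by have [free full] := um_schur simple simple' nzQ QA QB QC; exists Q.
Qed.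

Lemma addmx_pchar2 (char2 : 2%N \in [pchar k]) m n (X : 'M[k]_(m, n)) :
  X + X = 0.
Proof. by rewrite -mulr2n -scaler_nat (pcharf0 char2) scale0r. Qed.

Definition rows3 n (x y z : 'rV[k]_n) : 'M[k]_(3, n) :=
  \matrix_(i < 3) [:: x; y; z]`_i.

Lemma mul_rows3 n (x y z : 'rV[k]_n) (u : 'rV[k]_3) :
  u *m rows3 x y z = u 0 0 *: x + u 0 1 *: y + u 0 2 *: z.
Proof. by rewrite mulmx_sum_row sum3 !rowK. Qed.

Lemma V1_rep (char2 : 2%N \in [pchar k]) : um_rep (V1a k) (V1b k) (V1c k).
Proof.
have twice0 := addrr_pchar2 char2.
split; [| | | split]; apply/matrixP => i j;
  rewrite !(mxE, big_ord_recr, big_ord0) /=;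
  case: i => [[|[|[|i]]] ?] //; case: j => [[|[|[|j]]] ?] //=;
  by rewrite ?(mul0r, mulr0, mul1r, mulr1, add0r, addr0, twice0).
Qed.

Lemma V1a_cube : V1a k ^+ 3 = 0.
Proof.
apply/matrixP => i j; rewrite !exprS expr0 mulr1 -!mulmxE !(mxE, sum3) /=.
by case: i => [[|[|[|i]]] ?]; case: j => [[|[|[|j]]] ?];
  rewrite //= ?(mul0r, mulr0, add0r, mulr1).
Qed.

Lemma V1a_null (v : 'rV[k]_3) : v *m V1a k = 0 -> v = v 0 2 *: delta_mx 0 2.
Proof.
move=> /rowP vA; have := vA 1; have := vA 2.
rewrite !(mxE, sum3) /= !(mul0r, mulr0, add0r, mulr1, addr0) => v1 v0.
by apply/rowP; apply: ord3P; rewrite !mxE /= ?(mulr0, mulr1).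
Qed.

Lemma V1_simple : um_simple (V1a k) (V1b k) (V1c k).
Proof.
split=> // U stA stB _; have [-> | nzU] := eqVneq U 0; [by left | right].
have [v [vU nzv vA]] := stablemx_nilpotent_null stA V1a_cube nzU.
have nzv2 : v 0 2 != 0.
  by apply: contraNneq nzv => v2; rewrite (V1a_null vA) v2 scale0r.
pose e (j : 'I_3) : 'rV[k]_3 := delta_mx 0 j.
have e2U : (e 2 <= U)%MS.
  by move: vU; rewrite {1}(V1a_null vA) (eqmx_scale _ nzv2).
have lowerB (i j : 'I_3) : i = j.+1 :> nat -> e i *m V1b k = e j.
  move=> ij; rewrite -rowE; apply/rowP => l.
  by rewrite !mxE ij eqSS eq_sym eqxx andTb -val_eqE; case: (_ == _).
have e1U : (e 1 <= U)%MS.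
  by rewrite -(lowerB 2) //; exact: submx_trans (submxMr _ e2U) stB.
have e0U : (e 0 <= U)%MS.
  by rewrite -(lowerB 1) //; exact: submx_trans (submxMr _ e1U) stB.
by rewrite -sub1mx; apply/row_subP; apply: ord3P; rewrite row1.
Qed.

Section Representation.
Variables (n : nat) (A B C : 'M[k]_n).
Hypotheses (char2 : 2%N \in [pchar k]) (rep : um_rep A B C).

Let swap_pchar2 m (X Y Z : 'M[k]_(m, n)) : X + Y = Z -> Y = X + Z.
Proof. by move <-; rewrite addrA (addmx_pchar2 char2) add0r. Qed.

Lemma mulBA_row (v : 'rV_n) : v *m B *m A = v *m A *m B + v *m C.
Proof.
have [AB _ _ _] := rep.
by rewrite -!mulmxA -mulmxDr -(swap_pchar2 AB).
Qed.

Lemma mulBC_row (v : 'rV_n) : v *m B *m C = v *m C *m B + v *m B.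
Proof.
have [_ _ BC _] := rep; rewrite addrC in BC.
by rewrite -!mulmxA -mulmxDr -(swap_pchar2 BC).
Qed.

Lemma mulCA_row (v : 'rV_n) : v *m C *m A = v *m A *m C + v *m A.
Proof.
have [_ AC _ _] := rep.
by rewrite -!mulmxA -mulmxDr -(swap_pchar2 AC).
Qed.

Lemma mulCC_row (v : 'rV_n) : v *m C *m C = v *m C.
Proof.
have [_ _ _ [_ _ CC]] := rep.
by rewrite -mulmxA -[C *m C]addr0 -(swap_pchar2 CC).
Qed.

Hypothesis simple : um_simple A B C.

Lemma null_vector_full (v : 'rV_n) :
  v != 0 -> v *m A = 0 -> v *m B = 0 -> v *m C = 0 -> row_full v.
Proof.
move=> nzv vA vB vC.
have := um_schur (um_simple1 0 0 0) simple nzv.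
by rewrite !mul0mx vA vB vC => /(_ erefl erefl erefl) [].
Qed.

Lemma null_iso_V0 (v : 'rV_n) :
  v != 0 -> v *m A = 0 -> v *m B = 0 -> v *m C = 0 ->
  um_iso A B C (V0 k) (V0 k) (V0 k).
Proof.
move=> nzv vA vB vC; apply: um_iso_sym.
by apply: (um_iso_of_intertwiner (um_simple1 _ _ _) simple nzv);
  rewrite mul0mx ?vA ?vB ?vC.
Qed.

Lemma highest_weight_iso_V1 (w : 'rV_n) :
  w != 0 -> w *m A = 0 -> w *m C = w -> um_iso A B C (V1a k) (V1b k) (V1c k).
Proof.
move=> nzw wA wC; have twice0 := addmx_pchar2 char2.
set w1 := w *m B; set w2 := w1 *m B; set w3 := w2 *m B.
have w1A : w1 *m A = w by rewrite mulBA_row wA mul0mx add0r.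
have w1C : w1 *m C = 0 by rewrite mulBC_row wC twice0.
have w2A : w2 *m A = w1 by rewrite mulBA_row w1A w1C addr0.
have w2C : w2 *m C = w2 by rewrite mulBC_row w1C mul0mx add0r.
have w3A : w3 *m A = 0 by rewrite mulBA_row w2A w2C twice0.
have w3C : w3 *m C = 0 by rewrite mulBC_row w2C twice0.
have w3B : w3 *m B = 0.
  have [_ _ _ [_ B4 _]] := rep.
  have : w *m (B *m B *m B *m B) = 0 by rewrite B4 mulmx0.
  by rewrite !mulmxA.
have w3_0 : w3 = 0.
  apply/eqP; apply: contraNT nzw => nzw3.
  have C0 : C = 0.
    by apply: (row_full_inj (null_vector_full nzw3 w3A w3B w3C)); rewrite w3C mulmx0.
  by rewrite -wC C0 mulmx0.
apply: um_iso_sym.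
apply: (um_iso_of_intertwiner (Q := rows3 w2 w1 w) V1_simple simple).
- have row2 : row 2 (rows3 w2 w1 w) = w by rewrite rowK.
  by apply: contraNneq nzw => Q0; rewrite -row2 Q0 row0.
all: apply/row_matrixP; apply: ord3P; rewrite row_mul mul_rows3 row_mul rowK /=.
all: by rewrite !mxE /= ?(scale0r, scale1r, add0r, addr0) ?w2A ?w1A ?wA ?w2C ?w1C ?wC ?w3_0.
Qed.

End Representation.
End Modules.

Theorem proposition3p1 (k : closedFieldType) (hchar : 2%N \in [pchar k]) :
  [/\ um_rep (V0 k) (V0 k) (V0 k) /\ um_simple (V0 k) (V0 k) (V0 k),
      um_rep (V1a k) (V1b k) (V1c k) /\ um_simple (V1a k) (V1b k) (V1c k),
      ~ um_iso (V0 k) (V0 k) (V0 k) (V1a k) (V1b k) (V1c k)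
    & forall (n : nat) (A B C : 'M[k]_n),
        um_rep A B C -> um_simple A B C ->
        um_iso A B C (V0 k) (V0 k) (V0 k) \/ um_iso A B C (V1a k) (V1b k) (V1c k)].
Proof.
split.
- by split; [exact: um_rep0 | exact: um_simple1].
- by split; [exact: V1_rep | exact: V1_simple].
- by move/um_iso_dim.
move=> n A B C rep simple.
have A4 : A ^+ 4 = 0 by have [_ _ _ [A4 _ _]] := rep; rewrite !exprS expr0 mulr1 !mulrA.
have nz1 : 1%:M != 0 :> 'M[k]_n by rewrite -mxrank_eq0 mxrank1 -lt0n; case: simple.
have [v [_ nzv vA]] := stablemx_nilpotent_null (submx1 _) A4 nz1.
have [vC0 | nzvC] := eqVneq (v *m C) 0; last first.
  right; apply: (highest_weight_iso_V1 hchar rep simple nzvC).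
    by rewrite (mulCA_row hchar rep) vA mul0mx add0r.
  exact: (mulCC_row hchar rep).
have [vB0 | nzvB] := eqVneq (v *m B) 0; first by left; exact: null_iso_V0 nzv vA vB0 vC0.
right; apply: (highest_weight_iso_V1 hchar rep simple nzvB).
  by rewrite (mulBA_row hchar rep) vA mul0mx add0r.
by rewrite (mulBC_row hchar rep) vC0 mul0mx add0r.
Qed.
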